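(* Let $n\ge 1$ and let $B^{[n]}$ be the $n$-th Kronecker power of $$B=\begin{bmatrix}1 & \sqrt{2}-1\\ 1 & -\sqrt{2}-1\end{bmatrix},$$ with its $2^n$ rows labeled by the vectors of $F^n$ ($F=\{0,1\}$ the binary field) in lexicographic order. Let $K^{[n]}$ be the $n$-th Kronecker power of $K=\frac{1}{\sqrt2}\begin{bmatrix}1&1\\1&-1\end{bmatrix}$. Then the rows of $B^{[n]}$ whose labels have even Hamming weight form a basis of the eigenspace of the eigenvalue $1$ of $K^{[n]}$, i.e. of $\{x\in\mathbb{R}^{2^n} : xK^{[n]}=x\}$ (row vectors).
   Context: For a matrix $M$, the Kronecker powers are $M^{[1]}=M$ and $M^{[m]}=M^{[m-1]}\otimes M$. Lexicographic labeling: the row with index $j$ ($0\le j<2^n$) is labeled by the binary expansion of $j$ written as a vector of length $n$ (most significant bit first). *)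

From HB Require Import structures.
From mathcomp Require Import all_boot all_order all_algebra.
From mathcomp Require Import reals.
Set Implicit Arguments. Unset Strict Implicit. Unset Printing Implicit Defensive.
Import Order.TTheory GRing.Theory Num.Theory.
Local Open Scope ring_scope.

(* Kronecker product: row index i of A (x) B (A : m x n, B : p x q) is
   i = i1 * p + i2 with i1 < m, i2 < p (standard convention). *)
Lemma kron_divP m p (i : 'I_(m * p)) : (i %/ p < m)%N.
Proof.
case: p i => [|p] i; first by case: i => k; rewrite muln0.
by rewrite ltn_divLR.
Qed.

Lemma kron_modP m p (i : 'I_(m * p)) : (i %% p < p)%N.
Proof.
case: p i => [|p] i; first by case: i => k; rewrite muln0.
by rewrite ltn_pmod.
Qed.

Definition kron (R : pzRingType) m n p q (A : 'M[R]_(m, n)) (B : 'M[R]_(p, q))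
  : 'M[R]_(m * p, n * q) :=
  \matrix_(i, j) (A (Ordinal (kron_divP i)) (Ordinal (kron_divP j))
                  * B (Ordinal (kron_modP i)) (Ordinal (kron_modP j))).

Fixpoint kpow (R : pzRingType) (M : 'M[R]_2) (n : nat) : 'M[R]_(2 ^ n) :=
  match n return 'M[R]_(2 ^ n) with
  | 0 => 1%:M
  | n'.+1 => castmx (esym (expnSr 2 n'), esym (expnSr 2 n')) (kron (kpow M n') M)
  end.

(* Hamming weight of the length-n binary label of the row index j
   (number of ones in the binary expansion of j). *)
Definition hweight (n j : nat) : nat := (\sum_(k < n) odd (j %/ 2 ^ k))%N.

Definition Bmat (R : rcfType) : 'M[R]_2 :=
  \matrix_(i < 2, j < 2)
    (if i == 0 then (if j == 0 then 1 else Num.sqrt 2 - 1)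
     else (if j == 0 then 1 else - Num.sqrt 2 - 1)).

Definition Kmat (R : rcfType) : 'M[R]_2 :=
  (Num.sqrt 2)^-1 *: \matrix_(i < 2, j < 2)
    (if (i == 1) && (j == 1) then -1 else 1).

From mathcomp Require Import all_boot all_order all_algebra.
From mathcomp Require Import reals ring lra.
Set Implicit Arguments. Unset Strict Implicit. Unset Printing Implicit Defensive.
Import Order.TTheory GRing.Theory Num.Theory.
Local Open Scope ring_scope.

(* B is invertible and conjugates K to D = diag(1, -1): B K = D B. By the
   mixed-product rule for Kronecker products, B^[n] K^[n] = D^[n] B^[n], and
   D^[n] is diagonal with entry (-1)^(weight of the label) in row i. Hence x is
   fixed by K^[n] iff x (B^[n])^-1 is fixed by D^[n], i.e. vanishes at the
   odd-weight labels, i.e. x is a combination of the even-weight rows of B^[n];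
   these rows are independent since B^[n] is invertible. *)

Lemma kron_indexP n q (a : 'I_n) (b : 'I_q) : (a * q + b < n * q)%N.
Proof.
have lt_ab : (a * q + b < a.+1 * q)%N by rewrite mulSn addnC ltn_add2r.
exact: leq_trans lt_ab (leq_mul (ltn_ord a) (leqnn q)).
Qed.

Definition kron_index n q (a : 'I_n) (b : 'I_q) : 'I_(n * q) :=
  Ordinal (kron_indexP a b).

Lemma kron_index_div n q (a : 'I_n) (b : 'I_q) :
  Ordinal (kron_divP (kron_index a b)) = a.
Proof.
apply: val_inj => /=; have q_gt0 : (0 < q)%N by apply: leq_ltn_trans (ltn_ord b).
by rewrite divnMDl // divn_small // addn0.
Qed.

Lemma kron_index_mod n q (a : 'I_n) (b : 'I_q) :
  Ordinal (kron_modP (kron_index a b)) = b.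
Proof. by apply: val_inj => /=; rewrite modnMDl modn_small. Qed.

Lemma sum_kron_index (V : nmodType) n q (F : 'I_(n * q) -> V) :
  \sum_l F l = \sum_(a < n) \sum_(b < q) F (kron_index a b).
Proof.
rewrite pair_big /= (reindex (fun ab : 'I_n * 'I_q => kron_index ab.1 ab.2)) //=.
exists (fun l => (Ordinal (kron_divP l), Ordinal (kron_modP l))) => [[a b] _|l _] /=.
  by rewrite kron_index_div kron_index_mod.
by apply: val_inj => /=; rewrite -divn_eq.
Qed.

Section KroneckerPowers.
Variable R : comPzRingType.

Lemma kron_mulmx m n p q r s (A : 'M[R]_(m, n)) (B : 'M[R]_(p, q))
    (C : 'M[R]_(n, r)) (D : 'M[R]_(q, s)) :
  kron A B *m kron C D = kron (A *m C) (B *m D).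
Proof.
apply/matrixP => i j; rewrite !mxE sum_kron_index mulr_suml; apply: eq_bigr => a _.
rewrite mulr_sumr; apply: eq_bigr => b _.
by rewrite !mxE kron_index_div kron_index_mod mulrACA.
Qed.

Lemma kron_diag_mx m p (a : 'rV[R]_m) (b : 'rV[R]_p) :
  kron (diag_mx a) (diag_mx b) =
  diag_mx (\row_i (a 0 (Ordinal (kron_divP i)) * b 0 (Ordinal (kron_modP i)))).
Proof.
apply/matrixP => i j; rewrite !mxE.
have [<-|neq_ij] := eqVneq i j; first by rewrite !eqxx !mulr1n.
rewrite mulr0n; case: eqP => [eq_div|]; case: eqP => [eq_mod|];
  rewrite ?mulr0n ?mulr0 ?mul0r //.
move: eq_div eq_mod => [eq_div] [eq_mod]; case/eqP: neq_ij; apply: val_inj => /=.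
by rewrite (divn_eq i p) (divn_eq j p) eq_div eq_mod.
Qed.

Lemma castmx_mulmx m m' (e : m = m') (A B : 'M[R]_m) :
  castmx (e, e) A *m castmx (e, e) B = castmx (e, e) (A *m B).
Proof. by case: m' / e; rewrite !castmx_id. Qed.

Lemma castmx_diag_mx m m' (e : m = m') (a : 'rV[R]_m) :
  castmx (e, e) (diag_mx a) = diag_mx (castmx (erefl, e) a).
Proof. by case: m' / e; rewrite !castmx_id. Qed.

Lemma kpow_mulmx (A B : 'M[R]_2) n : kpow A n *m kpow B n = kpow (A *m B) n.
Proof.
elim: n => [|n IHn] /=; first by rewrite mul1mx.
by rewrite castmx_mulmx kron_mulmx IHn.
Qed.

Lemma kpow1 n : kpow (1%:M : 'M[R]_2) n = 1%:M.
Proof.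
elim: n => [|n IHn] //=.
rewrite IHn -!diag_const_mx kron_diag_mx castmx_diag_mx.
by congr diag_mx; apply/rowP => i; rewrite castmxE !mxE mulr1.
Qed.

Definition sign_diag m (w : 'I_m -> nat) : 'M[R]_m := diag_mx (\row_i (-1) ^+ w i).

Lemma hweightS n j : hweight n.+1 j = (hweight n (j %/ 2) + odd j)%N.
Proof.
rewrite /hweight big_ord_recl /= expn0 divn1 addnC; congr (_ + _)%N.
by apply: eq_bigr => k _; rewrite /bump /= add1n expnS divnMA.
Qed.

Lemma kpow_sign_diag n :
  kpow (sign_diag (@nat_of_ord 2)) n = sign_diag (fun i : 'I_(2 ^ n) => hweight n i).
Proof.
elim: n => [|n IHn] /=.
  by apply/matrixP => i j; rewrite !mxE /hweight big_ord0 expr0.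
rewrite IHn kron_diag_mx castmx_diag_mx; congr diag_mx.
by apply/rowP => i; rewrite castmxE !mxE hweightS exprD -modn2.
Qed.

End KroneckerPowers.

Arguments sign_diag {R m}.

Lemma kpow_unitmx (R : comUnitRingType) (A : 'M[R]_2) n :
  A \in unitmx -> kpow A n \in unitmx.
Proof.
move=> A_unit; have inv_kpow : kpow A n *m kpow (invmx A) n = 1%:M.
  by rewrite kpow_mulmx mulmxV // kpow1.
by case: (mulmx1_unit inv_kpow).
Qed.

Lemma sum_scale_row_mask (R : pzRingType) m n (p : pred 'I_m)
    (c : 'I_m -> R) (A : 'M[R]_(m, n)) :
  \sum_(i < m | p i) c i *: row i A = (\row_i (if p i then c i else 0)) *m A.
Proof.
rewrite mulmx_sum_row [RHS](bigID p) /=.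
rewrite [X in _ = _ + X]big1 ?addr0 => [|i /negbTE p_i]; last by rewrite mxE p_i scale0r.
by apply: eq_bigr => i p_i; rewrite mxE p_i.
Qed.

Section SignConjugate.
Variables (R : numDomainType) (m : nat) (w : 'I_m -> nat) (P K : 'M[R]_m).
Hypotheses (P_unit : P \in unitmx) (PK : P *m K = sign_diag w *m P).

Lemma rows_unitmx_free (p : pred 'I_m) (c : 'I_m -> R) :
  \sum_(i < m | p i) c i *: row i P = 0 -> forall i, p i -> c i = 0.
Proof.
rewrite sum_scale_row_mask => mask_P0 i p_i.
have /rowP/(_ i) : \row_j (if p j then c j else 0) = 0.
  by rewrite -[LHS](mulmxK P_unit) mask_P0 mul0mx.
by rewrite !mxE p_i.
Qed.

Lemma fixed_sign_diag (y : 'rV[R]_m) :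
  y *m sign_diag w = y <-> forall i, odd (w i) -> y 0 i = 0.
Proof.
rewrite /sign_diag mul_mx_diag; split => [/rowP fix_y i odd_i | y_odd].
  by have /eqP := fix_y i; rewrite !mxE -signr_odd odd_i expr1 mulrN1 eqNr => /eqP.
apply/rowP => i; rewrite !mxE -signr_odd.
by case: (boolP (odd (w i))) => [/y_odd ->|_]; rewrite ?mul0r ?expr0 ?mulr1.
Qed.

Lemma fixed_conj_sign_diag (x : 'rV[R]_m) :
  x *m K = x <->
  exists c : 'I_m -> R, x = \sum_(i < m | ~~ odd (w i)) c i *: row i P.
Proof.
split => [fix_x | [c ->]].
  have [y x_yP] : exists y, x = y *m P by exists (x *m invmx P); rewrite mulmxKV.
  have : y *m sign_diag w = y.
    by apply: (can_inj (mulmxK P_unit)); rewrite -mulmxA -PK mulmxA -x_yP fix_x.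
  move/fixed_sign_diag => y_odd; exists (y 0).
  rewrite sum_scale_row_mask [LHS]x_yP; congr (_ *m _); apply/rowP => i.
  by rewrite mxE; case: ifP => // /negbFE /y_odd.
rewrite sum_scale_row_mask -mulmxA PK mulmxA; congr (_ *m _).
by apply/fixed_sign_diag => i odd_i; rewrite mxE odd_i.
Qed.

End SignConjugate.

Section TheMatrices.
Variable R : rcfType.

Lemma sqrt2_sqr : Num.sqrt (2 : R) * Num.sqrt 2 = 2.
Proof. by rewrite -expr2 sqr_sqrtr ?ler0n. Qed.

Lemma sqrt2_neq0 : Num.sqrt (2 : R) != 0.
Proof. by rewrite sqrtr_eq0 -ltNge ltr0n. Qed.

Lemma Bmat_Kmat : Bmat R *m Kmat R = sign_diag (@nat_of_ord 2) *m Bmat R.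
Proof.
have inv_sqrt2 : (Num.sqrt (2 : R))^-1 = Num.sqrt 2 / 2.
  apply: (mulfI sqrt2_neq0); rewrite mulfV ?sqrt2_neq0 // mulrA sqrt2_sqr divff //.
  by rewrite pnatr_eq0.
have sqr := sqrt2_sqr; apply/matrixP => i j.
rewrite !mxE !big_ord_recl !big_ord0 !mxE inv_sqrt2.
case: i => [[|[|//]] ?]; case: j => [[|[|//]] ?] /=; rewrite ?mxE /=; nra.
Qed.

Lemma det_Bmat : \det (Bmat R) = - 2 * Num.sqrt 2.
Proof.
rewrite (expand_det_row _ ord0) !big_ord_recl big_ord0 /cofactor.
rewrite !mxE !det_mx11 !mxE /= expr0 expr1; ring.
Qed.

Lemma Bmat_unitmx : Bmat R \in unitmx.
Proof.
by rewrite unitmxE unitfE det_Bmat mulf_neq0 ?sqrt2_neq0 // oppr_eq0 pnatr_eq0.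
Qed.

End TheMatrices.

Theorem lemma1 (R : realType) (n : nat) (hn : (1 <= n)%N) :
  (forall c : 'I_(2 ^ n) -> R,
     \sum_(i < 2 ^ n | ~~ odd (hweight n i)) c i *: row i (kpow (Bmat R) n) = 0 ->
     forall i : 'I_(2 ^ n), ~~ odd (hweight n i) -> c i = 0)
  /\
  (forall x : 'rV[R]_(2 ^ n),
     x *m kpow (Kmat R) n = x <->
     exists c : 'I_(2 ^ n) -> R,
       x = \sum_(i < 2 ^ n | ~~ odd (hweight n i)) c i *: row i (kpow (Bmat R) n)).
Proof.
have P_unit := kpow_unitmx n (Bmat_unitmx R).
have PK : kpow (Bmat R) n *m kpow (Kmat R) n =
          sign_diag (fun i : 'I_(2 ^ n) => hweight n i) *m kpow (Bmat R) n.
  by rewrite kpow_mulmx Bmat_Kmat -kpow_mulmx kpow_sign_diag.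
split; first exact: rows_unitmx_free.
exact: fixed_conj_sign_diag PK.
Qed.
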